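(* Let $X$ be a finite dimensional real Hilbert space, let $g:X\to\mathbb{R}$ be a convex function (finite everywhere) with $\min_{x\in X}g(x)<0$, let $C:=\{x\in X:g(x)\leq0\}$, and let $\bar{x}\in X$. Consider the following iteration. Set $x_{0}=\bar{x}$ and let $H_{0}=\{x:\langle c_{0},x\rangle\leq b\}$ be a set of this form with $C\subset H_{0}$ (possibly $c_{0}=0$, $b=0$, i.e. $H_{0}=X$). For $k=0,1,2,\dots$: choose $s_{k}\in\partial g(x_{k})$, let $\tilde{C}_{k}=\{x:g(x_{k})+\langle x-x_{k},s_{k}\rangle\leq0\}$, let $x_{k+1}=P_{H_{k}\cap\tilde{C}_{k}}(\bar{x})$, and let $H_{k+1}$ be the halfspace such that $x_{k+1}=P_{H_{k+1}}(\bar{x})$, namely $H_{k+1}=\{x:\langle\bar{x}-x_{k+1},x-x_{k+1}\rangle\leq0\}$. Suppose that $g(x_{k})>0$ for all $k\geq0$ (so that $x_{k}\notin\tilde{C}_{k}$ and all iterates are defined). Let $v_{k}:=d(\bar{x},C)^{2}-\|\bar{x}-x_{k}\|^{2}$. Then $v_{k}$ converges to zero at a rate $O(1/k)$, i.e. there is a constant $M$ with $v_{k}\leq M/k$ for all $k\geq1$.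
   Context: $P_{S}(y)$ denotes the projection of $y$ onto a nonempty closed convex set $S$; $d(y,S)$ is the distance from $y$ to $S$; $\partial g(x)$ is the convex subdifferential. Note $v_k$ is twice the gap between the optimal value $\frac12 d(\bar x,C)^2$ of $\min_{x\in C}\frac12\|x-\bar x\|^2$ and the value $\frac12\|\bar x-x_k\|^2$ of the relaxed problem. *)

(* X = 'rV[R]_n with the standard inner product, R : realType. *)
From HB Require Import structures.
From mathcomp Require Import all_boot all_order all_algebra.
From mathcomp Require Import boolp classical_sets reals.
Set Implicit Arguments. Unset Strict Implicit. Unset Printing Implicit Defensive.
Import Order.TTheory GRing.Theory Num.Theory.
Local Open Scope ring_scope.
Local Open Scope classical_set_scope.

Definition ip (R : realType) (n : nat) (u v : 'rV[R]_n) : R := (u *m v^T) 0 0.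

Definition vnorm (R : realType) (n : nat) (u : 'rV[R]_n) : R := Num.sqrt (ip u u).

Definition convex_fun (R : realType) (n : nat) (g : 'rV[R]_n -> R) : Prop :=
  forall (x y : 'rV[R]_n) (t : R), 0 <= t -> t <= 1 ->
    g (t *: x + (1 - t) *: y) <= t * g x + (1 - t) * g y.

Definition subgrad (R : realType) (n : nat) (g : 'rV[R]_n -> R) (x s : 'rV[R]_n) : Prop :=
  forall y, g x + ip (y - x) s <= g y.

Definition is_proj (R : realType) (n : nat) (S : set 'rV[R]_n) (y p : 'rV[R]_n) : Prop :=
  S p /\ forall q, S q -> vnorm (y - p) <= vnorm (y - q).

Definition dist (R : realType) (n : nat) (y : 'rV[R]_n) (S : set 'rV[R]_n) : R :=
  inf [set vnorm (y - z) | z in S].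

(* The gap v_k = d(xbar, C)^2 - |xbar - x_k|^2 is nonincreasing: x_{k+1} lies in H_k,
   so Pythagoras gives |xbar - x_k|^2 + |x_{k+1} - x_k|^2 <= |xbar - x_{k+1}|^2.
   While v_{k+1} > 0 the iterates stay in a fixed ball around xbar, where the convex g
   is bounded, hence its subgradients are bounded by some B.  The Slater point z yields
   the error bound d(xbar, C) - |xbar - x_k| <= K g(x_k), and x_{k+1} lying in the cut
   gives g(x_k) <= B |x_{k+1} - x_k|.  Together v_k^2 <= c (v_k - v_{k+1}), and this
   recursion forces v_k = O(1/k). *)
From HB Require Import structures.
From mathcomp Require Import all_boot all_order all_algebra.
From mathcomp Require Import boolp classical_sets reals.
From mathcomp Require Import ring lra.
Set Implicit Arguments. Unset Strict Implicit. Unset Printing Implicit Defensive.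
Import Order.TTheory GRing.Theory Num.Theory.
Local Open Scope ring_scope.
Local Open Scope classical_set_scope.

Section Euclidean.
Variables (R : realType) (n : nat).
Implicit Types (u v w y p : 'rV[R]_n) (a : R).

Lemma ipE u v : ip u v = \sum_j u 0 j * v 0 j.
Proof. by rewrite /ip !mxE; apply: eq_bigr => j _; rewrite mxE. Qed.

Lemma ipC u v : ip u v = ip v u.
Proof. by rewrite !ipE; apply: eq_bigr => j _; rewrite mulrC. Qed.

Lemma ipDl u v w : ip (u + w) v = ip u v + ip w v.
Proof. by rewrite !ipE -big_split; apply: eq_bigr => j _; rewrite mxE mulrDl. Qed.

Lemma ipZl a u v : ip (a *: u) v = a * ip u v.
Proof. by rewrite !ipE mulr_sumr; apply: eq_bigr => j _; rewrite mxE mulrA. Qed.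

Lemma ipNl u v : ip (- u) v = - ip u v.
Proof. by rewrite -scaleN1r ipZl mulN1r. Qed.

Lemma ipBl u v w : ip (u - w) v = ip u v - ip w v.
Proof. by rewrite ipDl ipNl. Qed.

Lemma ipDr u v w : ip v (u + w) = ip v u + ip v w.
Proof. by rewrite ipC ipDl !(ipC v). Qed.

Lemma ipZr a u v : ip v (a *: u) = a * ip v u.
Proof. by rewrite ipC ipZl ipC. Qed.

Lemma ipNr u v : ip v (- u) = - ip v u.
Proof. by rewrite ipC ipNl ipC. Qed.

Lemma ipBr u v w : ip v (u - w) = ip v u - ip v w.
Proof. by rewrite ipDr ipNr. Qed.

Lemma ip_ge0 u : 0 <= ip u u.
Proof. by rewrite ipE; apply: sumr_ge0 => j _; rewrite -expr2 sqr_ge0. Qed.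

Lemma vnorm_ge0 u : 0 <= vnorm u.
Proof. exact: sqrtr_ge0. Qed.

Lemma vnorm_sqr u : vnorm u ^+ 2 = ip u u.
Proof. by rewrite sqr_sqrtr // ip_ge0. Qed.

Lemma vnormN u : vnorm (- u) = vnorm u.
Proof. by rewrite /vnorm ipNl ipNr opprK. Qed.

Lemma vnormB u v : vnorm (u - v) = vnorm (v - u).
Proof. by rewrite -vnormN opprB. Qed.

Lemma vnormZ a u : vnorm (a *: u) = `|a| * vnorm u.
Proof.
by rewrite /vnorm ipZl ipZr mulrA -expr2 sqrtrM ?sqr_ge0 // sqrtr_sqr.
Qed.

Lemma vnorm0 : vnorm (0 : 'rV[R]_n) = 0.
Proof. by rewrite -(scale0r 0) vnormZ normr0 mul0r. Qed.

Lemma vnorm_sqrB u v : vnorm (u - v) ^+ 2 = vnorm u ^+ 2 - 2 * ip u v + vnorm v ^+ 2.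
Proof. by rewrite !vnorm_sqr !(ipBl, ipBr) (ipC v u); ring. Qed.

Lemma ip_sqr_le u v : ip u v ^+ 2 <= ip u u * ip v v.
Proof.
set a := ip u u; set b := ip v v; set p := ip u v.
have a0 : 0 <= a := ip_ge0 u; have b0 : 0 <= b := ip_ge0 v.
have hb : 0 <= ip (b *: u - p *: v) (b *: u - p *: v) := ip_ge0 _.
have ha : 0 <= ip (a *: v - p *: u) (a *: v - p *: u) := ip_ge0 _.
have hD : 0 <= ip (u + v) (u + v) := ip_ge0 _.
have hB : 0 <= ip (u - v) (u - v) := ip_ge0 _.
rewrite !(ipBl, ipBr, ipDl, ipDr, ipZl, ipZr) -/a -/b -/p (ipC v u) -/p
  in hb ha hD hB.
clearbody a b p.
have [bp|] := ltrP 0 b; first by rewrite -subr_ge0 -(pmulr_rge0 _ bp); nra.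
have [ap|] := ltrP 0 a; first by rewrite -subr_ge0 -(pmulr_rge0 _ ap); nra.
(* for a = b = 0, the squares of u + v and u - v force p = 0 *)
move=> a_le0 b_le0; have -> : p = 0 by lra.
by rewrite expr0n /= mulr_ge0.
Qed.

Lemma ip_le_vnormM u v : ip u v <= vnorm u * vnorm v.
Proof.
have := ip_sqr_le u v; rewrite -!vnorm_sqr -exprMn.
have := mulr_ge0 (vnorm_ge0 u) (vnorm_ge0 v); nra.
Qed.

Lemma ler_vnormD u v : vnorm (u + v) <= vnorm u + vnorm v.
Proof.
have : vnorm (u + v) ^+ 2 <= (vnorm u + vnorm v) ^+ 2.
  rewrite vnorm_sqr !ipDl !ipDr (ipC v u) sqrrD -!vnorm_sqr.
  have := ip_le_vnormM u v; lra.
have := vnorm_ge0 u; have := vnorm_ge0 v; have := vnorm_ge0 (u + v); nra.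
Qed.

Lemma ler_coord_vnorm u i : `|u 0 i| <= vnorm u.
Proof.
have : `|u 0 i| ^+ 2 <= vnorm u ^+ 2.
  rewrite real_normK ?num_real // vnorm_sqr ipE (bigD1 i) //= -expr2 lerDl.
  by apply: sumr_ge0 => j _; rewrite -expr2 sqr_ge0.
have := vnorm_ge0 u; have := normr_ge0 (u 0 i); nra.
Qed.

Lemma dist_le (S : set 'rV[R]_n) y p :
  S p -> dist y S <= vnorm (y - p).
Proof.
move=> Sp; apply: ge_inf; last by exists p.
by exists 0 => _ [q _ <-]; apply: vnorm_ge0.
Qed.

Lemma dist_ge0 (S : set 'rV[R]_n) y : 0 <= dist y S.
Proof.
rewrite /dist; set E := [set _ | _ in _].
have [->|/set0P neE] := eqVneq E set0; first by rewrite inf0.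
by apply: lb_le_inf => // _ [p _ <-]; apply: vnorm_ge0.
Qed.

End Euclidean.

Section Convex.
Variables (R : realType) (n : nat) (g : 'rV[R]_n -> R).
Hypothesis cvx : convex_fun g.
Implicit Types (a b c e u x s y z : 'rV[R]_n) (r t B : R).

Lemma convex_le_max a b t :
  0 <= t -> t <= 1 -> g (t *: a + (1 - t) *: b) <= Num.max (g a) (g b).
Proof.
move=> t0 t1; apply: le_trans (cvx _ _ t0 t1) _.
have ha : g a <= Num.max (g a) (g b) by rewrite le_max lexx.
have hb : g b <= Num.max (g a) (g b) by rewrite le_max lexx orbT.
nra.
Qed.

Lemma convex_bounded_on_segment c e r : 0 < r ->
  exists B, forall a : R, `|a| <= r -> g (c + a *: e) <= B.
Proof.
move=> r0; exists (Num.max (g (c + r *: e)) (g (c + (- r) *: e))) => a.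
rewrite ler_norml => /andP[ra ar].
pose t := (r + a) / (2 * r).
have -> : c + a *: e = t *: (c + r *: e) + (1 - t) *: (c + (- r) *: e).
  by apply/rowP => i; rewrite !mxE /t; field; lra.
by apply: convex_le_max; rewrite /t ?divr_ge0 ?ler_pdivrMr; lra.
Qed.

(* Induction on the number [j] of leading coordinates that may be nonzero:
   [c + u] is the midpoint of [c + 2 u'], with coordinate [j] of [u'] zeroed,
   and of a point on the line through [c] in direction [e_j]. *)
Lemma convex_bounded_on_box c j r : 0 < r -> exists B, forall u,
  (forall i, `|u 0 i| <= r) -> (forall i : 'I_n, (j <= i)%N -> u 0 i = 0) ->
  g (c + u) <= B.
Proof.
elim: j r => [|j IH] r r0.
  exists (g c) => u _ u0; suff -> : u = 0 by rewrite addr0.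
  by apply/rowP => i; rewrite mxE u0.
have [jn|nj] := ltnP j n; last first.
  have [B HB] := IH r r0; exists B => u ur u0; apply: HB => // i ji.
  by have := ltn_ord i; rewrite ltnNge (leq_trans nj ji).
pose jj := Ordinal jn; pose e : 'rV[R]_n := delta_mx 0 jj.
have e_jj : e 0 jj = 1 by rewrite mxE !eqxx.
have e_i i : i != jj -> e 0 i = 0 by move=> /negPf hi; rewrite mxE hi andbF.
clearbody e.
have [B1 HB1] := IH (2 * r) ltac:(lra).
have [B2 HB2] := convex_bounded_on_segment c e (r := 2 * r) ltac:(lra).
exists (Num.max B1 B2) => u ur u0.
pose u' := u - u 0 jj *: e.
have h1 : g (c + 2 *: u') <= B1.
  apply: HB1 => i; rewrite !mxE; have [->|hi] := eqVneq i jj.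
  - by rewrite e_jj mulr1 subrr mulr0 normr0; lra.
  - by rewrite e_i // mulr0 subr0 normrM ger0_norm ?ler_pM2l //; lra.
  - by rewrite e_jj mulr1 subrr mulr0.
  - move=> ji; rewrite e_i // mulr0 subr0 u0 ?mulr0 //.
    by rewrite ltn_neqAle ji andbT; apply: contra hi => /eqP hij; apply/eqP/val_inj.
have h2 : g (c + (2 * u 0 jj) *: e) <= B2.
  by apply: HB2; rewrite normrM ger0_norm ?ler_pM2l //; lra.
have -> : c + u = 2^-1 *: (c + 2 *: u') + (1 - 2^-1) *: (c + (2 * u 0 jj) *: e).
  by apply/rowP => i; rewrite !mxE; field.
apply: le_trans (convex_le_max _ _ (t := 2^-1) _ _) _; [lra | lra |].
by rewrite ge_max !le_max h1 h2 orbT.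
Qed.

Lemma convex_bounded_on_ball c r : exists B, forall u, vnorm (u - c) <= r -> g u <= B.
Proof.
have r0 : 0 <= Num.max r 0 by rewrite le_max lexx orbT.
have rr : r <= Num.max r 0 by rewrite le_max lexx.
have [B HB] := convex_bounded_on_box c n (r := Num.max r 0 + 1) ltac:(lra).
exists B => u ucr; rewrite -(subrKC c u); apply: HB => i; last first.
  by rewrite leqNgt ltn_ord.
by apply: le_trans (ler_coord_vnorm _ i) _; lra.
Qed.

Lemma subgrad_vnorm_le c x s r B :
  (forall u, vnorm (u - c) <= r + 1 -> g u <= B) -> vnorm (x - c) <= r ->
  subgrad g x s -> vnorm s <= B - g x.
Proof.
move=> gB xcr sub; have [s0|s_gt0] := lerP (vnorm s) 0.
  by apply: le_trans s0 _; rewrite subr_ge0 gB //; lra.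
(* test the subgradient inequality at the point at distance 1 from x in direction s *)
pose u := x + (vnorm s)^-1 *: s.
have ux : u - x = (vnorm s)^-1 *: s by rewrite addrC addKr.
have := sub u; rewrite ux ipZl -vnorm_sqr expr2 mulKf ?gt_eqF //.
suff : g u <= B by lra.
apply: gB; rewrite -(subrK x u) ux -addrA; apply: le_trans (ler_vnormD _ _) _.
rewrite vnormZ ger0_norm ?invr_ge0 ?(ltW s_gt0) // mulVf ?gt_eqF //; lra.
Qed.

(* The segment from [y] to the Slater point [z] enters the sublevel set at [t]. *)
Lemma dist_sublevel_le xbar y z : g z < 0 -> 0 <= g y ->
  dist xbar [set w | g w <= 0] <= vnorm (xbar - y) + g y / - g z * vnorm (y - z).
Proof.
move=> gz gy; pose t := g y / (g y - g z).
have t0 : 0 <= t by rewrite divr_ge0 //; lra.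
have t1 : t <= 1 by rewrite ler_pdivrMr; lra.
have tg : t * (g y - g z) = g y by rewrite mulfVK // gt_eqF //; lra.
apply: le_trans (dist_le _ (p := t *: z + (1 - t) *: y) _) _.
  by rewrite /= (le_trans (cvx _ _ t0 t1)) //; nra.
have -> : xbar - (t *: z + (1 - t) *: y) = (xbar - y) + t *: (y - z).
  by apply/rowP => i; rewrite !mxE; ring.
apply: le_trans (ler_vnormD _ _) _; rewrite lerD2l vnormZ ger0_norm //.
apply: ler_wpM2r; first exact: vnorm_ge0.
by rewrite ler_pdivlMr ?oppr_gt0 //; nra.
Qed.

End Convex.

Section Rate.
Variable R : realFieldType.

Lemma sqr_gap_le (D N N' a d : R) : 0 <= N -> N <= D -> D - N <= a * d ->
  N ^+ 2 + d ^+ 2 <= N' ^+ 2 ->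
  (D ^+ 2 - N ^+ 2) ^+ 2 <= 4 * D ^+ 2 * a ^+ 2 * (N' ^+ 2 - N ^+ 2).
Proof.
move=> N0 ND gap step.
have gap2 : (D - N) ^+ 2 <= a ^+ 2 * (N' ^+ 2 - N ^+ 2).
  apply: le_trans (_ : (a * d) ^+ 2 <= _); first by rewrite ler_sqr ?nnegrE; lra.
  by rewrite exprMn ler_wpM2l ?sqr_ge0 //; lra.
have sum2 : (D + N) ^+ 2 <= 4 * D ^+ 2 by nra.
have -> : D ^+ 2 - N ^+ 2 = (D - N) * (D + N) by ring.
rewrite exprMn mulrC -mulrA.
by apply: ler_pM; rewrite ?sqr_ge0.
Qed.

Lemma quadratic_decrease_rate (v : nat -> R) (c : R) : 0 < c ->
  (forall k, v k.+1 <= v k) ->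
  (forall k, 0 < v k.+1 -> v k ^+ 2 <= c * (v k - v k.+1)) ->
  exists M, forall k, (1 <= k)%N -> v k <= M / k%:R.
Proof.
move=> c0 decr vsq; set M := Num.max c (v 1%N); exists M.
have cM : c <= M by rewrite le_max lexx.
have v1M : v 1%N <= M by rewrite le_max lexx orbT.
elim=> [//|[_ _|k IH _]]; first by rewrite divr1.
have k_gt0 : 0 < k.+1%:R :> R by rewrite ltr0n.
have [p_le0|p_gt0] := lerP (v k.+2) 0.
  by rewrite (le_trans p_le0) // divr_ge0 ?ler0n //; lra.
move: IH => /(_ isT); rewrite !ler_pdivlMr ?ltr0n // => IH.
have q_sq := vsq _ p_gt0; have pq := decr k.+1.
have pcq : v k.+2 * (c + v k.+1) <= c * v k.+1 by nra.
rewrite -(@ler_pM2r _ (c + v k.+1)); last lra.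
rewrite -natr1; nra.
Qed.

End Rate.

Section Iteration.
Variables (R : realType) (n : nat) (g : 'rV[R]_n -> R) (xbar z : 'rV[R]_n).
Variables (x s : nat -> 'rV[R]_n).
Hypothesis cvx : convex_fun g.
Hypothesis gz_lt0 : g z < 0.
Hypothesis x0 : x 0%N = xbar.
Hypothesis s_subgrad : forall k, subgrad g (x k) (s k).
Hypothesis gx_gt0 : forall k, 0 < g (x k).
Hypothesis x_halfspace : forall k, ip (xbar - x k.+1) (x k.+2 - x k.+1) <= 0.
Hypothesis x_cut : forall k, g (x k) + ip (x k.+1 - x k) (s k) <= 0.

Local Notation D := (dist xbar [set y | g y <= 0]).
Local Notation N k := (vnorm (xbar - x k)).
Local Notation v k := (D ^+ 2 - N k ^+ 2).

Lemma iter_norm_step k : N k ^+ 2 + vnorm (x k.+1 - x k) ^+ 2 <= N k.+1 ^+ 2.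
Proof.
case: k => [|k]; first by rewrite x0 subrr vnorm0 expr0n add0r vnormB.
have -> : xbar - x k.+2 = (xbar - x k.+1) - (x k.+2 - x k.+1).
  by rewrite opprB addrA subrK.
by rewrite (vnorm_sqrB (xbar - x k.+1)); have := x_halfspace k; lra.
Qed.

Lemma iter_v_decreasing k : v k.+1 <= v k.
Proof. by have := iter_norm_step k; have := sqr_ge0 (vnorm (x k.+1 - x k)); lra. Qed.

Lemma iter_g_le k : g (x k) <= vnorm (x k.+1 - x k) * vnorm (s k).
Proof.
have := ip_le_vnormM (x k - x k.+1) (s k).
by rewrite -[x k - x k.+1]opprB ipNl vnormN; have := x_cut k; lra.
Qed.

Lemma iter_norm_le k : 0 < v k.+1 -> N k <= D.
Proof.
move=> v_gt0; have := iter_norm_step k; have := sqr_ge0 (vnorm (x k.+1 - x k)).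
have := vnorm_ge0 (xbar - x k); have := vnorm_ge0 (xbar - x k.+1).
have := dist_ge0 [set y | g y <= 0] xbar; nra.
Qed.

Section BoundedSubgradients.
Variable B : R.
Hypothesis gB : forall u, vnorm (u - xbar) <= D + 1 -> g u <= B.

Local Notation a := ((D + vnorm (xbar - z)) / - g z * B).

Lemma iter_gap_le k : N k <= D -> D - N k <= a * vnorm (x k.+1 - x k).
Proof.
move=> NkD; set K := (D + vnorm (xbar - z)) / - g z.
have K0 : 0 <= K.
  by rewrite divr_ge0 ?addr_ge0 ?dist_ge0 ?vnorm_ge0 // oppr_ge0 ltW.
have sB : vnorm (s k) <= B.
  have := subgrad_vnorm_le gB (x := x k) _ (s_subgrad k).
  by rewrite vnormB => /(_ NkD); have := gx_gt0 k; lra.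
have gB' : g (x k) <= vnorm (x k.+1 - x k) * B.
  by rewrite (le_trans (iter_g_le k)) // ler_wpM2l ?vnorm_ge0.
have xz : vnorm (x k - z) <= D + vnorm (xbar - z).
  rewrite -(subrK xbar (x k)) -addrA; apply: le_trans (ler_vnormD _ _) _.
  by rewrite (vnormB (x k)) lerD2r.
have q0 : 0 <= g (x k) / - g z.
  by rewrite divr_ge0 ?(ltW (gx_gt0 k)) // oppr_ge0 ltW.
have := dist_sublevel_le cvx xbar gz_lt0 (ltW (gx_gt0 k)).
have := ler_wpM2l q0 xz.
have -> : g (x k) / - g z * (D + vnorm (xbar - z)) = g (x k) * K by rewrite /K; ring.
have := ler_wpM2r K0 gB'; lra.
Qed.

Lemma iter_v_sqr_le k : 0 < v k.+1 ->
  v k ^+ 2 <= (4 * D ^+ 2 * a ^+ 2 + 1) * (v k - v k.+1).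
Proof.
move=> v_gt0; have NkD := iter_norm_le v_gt0.
have := sqr_gap_le (vnorm_ge0 _) NkD (iter_gap_le NkD) (iter_norm_step k).
have := iter_v_decreasing k; lra.
Qed.

End BoundedSubgradients.

Lemma iter_rate : exists M, forall k, (1 <= k)%N -> v k <= M / k%:R.
Proof.
have [B gB] := convex_bounded_on_ball cvx xbar (D + 1).
apply: quadratic_decrease_rate (iter_v_decreasing) (iter_v_sqr_le gB).
by rewrite -mulrA -exprMn; apply: ltr_wpDl ltr01; rewrite mulr_ge0 ?sqr_ge0.
Qed.

End Iteration.

Unset Implicit Arguments.

Theorem mainTheorem3 (R : realType) (n : nat) (g : 'rV[R]_n -> R)
  (xbar c0 : 'rV[R]_n) (b : R) (x s : nat -> 'rV[R]_n) :
  convex_fun g ->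
  (exists z, g z < 0) ->
  let C := [set z | g z <= 0] in
  let H := fun k : nat =>
    match k with
    | 0%N => [set z | ip c0 z <= b]
    | k'.+1 => [set z | ip (xbar - x k) (z - x k) <= 0]
    end in
  let Ct := fun k : nat => [set z | g (x k) + ip (z - x k) (s k) <= 0] in
  C `<=` H 0%N ->
  x 0%N = xbar ->
  (forall k, subgrad g (x k) (s k)) ->
  (forall k, is_proj (H k `&` Ct k) xbar (x k.+1)) ->
  (forall k, 0 < g (x k)) ->
  exists M : R, forall k : nat, (1 <= k)%N ->
    dist xbar C ^+ 2 - vnorm (xbar - x k) ^+ 2 <= M / k%:R.
Proof.
move=> cvx [z gz_lt0] C H Ct _ x0 s_subgrad x_proj gx_gt0.
have x_halfspace k : ip (xbar - x k.+1) (x k.+2 - x k.+1) <= 0.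
  by case: (x_proj k.+1) => -[].
have x_cut k : g (x k) + ip (x k.+1 - x k) (s k) <= 0.
  by case: (x_proj k) => -[].
exact: iter_rate cvx gz_lt0 x0 s_subgrad gx_gt0 x_halfspace x_cut.
Qed.
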